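(* For every $n\ge3$ there exists an instance of the general public project problem with $n$ players (i.e., a choice of $c>0$ and cost shares $c_1,\dots,c_n>0$ with $\sum_ic_i=c$) for which the BC mechanism dominates the VCG mechanism.
   Context: General public project problem: $n$ players, decisions $D=\{0,1\}$, $\Theta_i=[0,c]$ with $c>0$, $v_i(d,\theta_i)=d(\theta_i-c_i)$ where $c_i>0$ and $\sum_ic_i=c$; efficient decision $f(\theta)=1$ iff $\sum_i\theta_i\ge c$. Player $i$'s utility is $v_i(f(\theta),\theta_i)+t_i(\theta)$. The VCG (Clarke) mechanism: $t_i^{VCG}(\theta)=\sum_{j\ne i}v_j(f(\theta),\theta_j)-\max_{d\in D}\sum_{j\ne i}v_j(d,\theta_j)$. The BC (Bailey–Cavallo) mechanism: $t_i^{BC}(\theta)=t_i^{VCG}(\theta)-S_i(\theta_{-i})/n$ where $S_i(\theta_{-i})=\max_{\theta_i'\in[0,c]}\sum_{k=1}^n t_k^{VCG}(\theta_i',\theta_{-i})$. $t'$ dominates $t$ if $t_i(\theta)\le t'_i(\theta)$ for all $\theta,i$, strictly for some $\theta,i$. *)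

From Stdlib Require Import Reals Lra Lia Arith Classical ClassicalDescription ClassicalEpsilon.
Open Scope R_scope.

(* Players are indexed 0..n-1; type profiles and cost shares are nat -> R
   (values at indices >= n are irrelevant). *)

Fixpoint sumR (n : nat) (g : nat -> R) : R :=
  match n with
  | O => 0
  | S m => sumR m g + g m
  end.

Definition sumR_ex (n i : nat) (g : nat -> R) : R :=
  sumR n (fun j => if Nat.eq_dec j i then 0 else g j).

(* Decisions D = {0,1}, encoded as bool (true = 1 = build). *)
Definition valuation (ci : R) (d : bool) (thi : R) : R :=
  if d then thi - ci else 0.

Definition eff_decision (n : nat) (c : R) (th : nat -> R) : bool :=
  if Rle_dec c (sumR n th) then true else false.

Definition t_VCG (n : nat) (c : R) (cs : nat -> R) (th : nat -> R) (i : nat) : R :=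
  sumR_ex n i (fun j => valuation (cs j) (eff_decision n c th) (th j))
  - Rmax (sumR_ex n i (fun j => valuation (cs j) false (th j)))
         (sumR_ex n i (fun j => valuation (cs j) true (th j))).

Definition upd (th : nat -> R) (i : nat) (x : R) : nat -> R :=
  fun k => if Nat.eq_dec k i then x else th k.

(* Least upper bound of a set of reals (0 if it does not exist).
   When the set has a maximum, this is that maximum. *)
Definition Rsup (E : R -> Prop) : R :=
  match excluded_middle_informative (exists l, is_lub E l) with
  | left h => proj1_sig (constructive_indefinite_description _ h)
  | right _ => 0
  end.

Definition S_BC (n : nat) (c : R) (cs : nat -> R) (th : nat -> R) (i : nat) : R :=
  Rsup (fun y => exists x, 0 <= x <= c /\
          y = sumR n (fun k => t_VCG n c cs (upd th i x) k)).

Definition t_BC (n : nat) (c : R) (cs : nat -> R) (th : nat -> R) (i : nat) : R :=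
  t_VCG n c cs th i - S_BC n c cs th i / INR n.

Definition in_types (n : nat) (c : R) (th : nat -> R) : Prop :=
  forall k, (k < n)%nat -> 0 <= th k <= c.

Definition dominates (n : nat) (c : R)
    (t' t : (nat -> R) -> nat -> R) : Prop :=
  (forall th i, in_types n c th -> (i < n)%nat -> t th i <= t' th i) /\
  (exists th i, in_types n c th /\ (i < n)%nat /\ t th i < t' th i).

From Stdlib Require Import Reals Lra Lia ClassicalDescription ClassicalEpsilon.
Open Scope R_scope.

(* VCG transfers are never positive, so the total VCG payment
   sum_k t_k^VCG is <= 0 at every profile; hence S_i <= 0 and the BC transfer
   t_i^VCG - S_i/n is always at least the VCG transfer: BC weakly dominates VCG
   in every instance.  Domination is strict as soon as some profile theta and
   player i have the property that, whatever type i reports, the total VCG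
   payment stays below -delta < 0: then S_i <= -delta and BC pays i at least
   delta/n more.  For n >= 3 we exhibit such an instance: c = n + 2 with cost
   shares c_1 = 3 and c_k = 1 otherwise, and theta = (1, 0, 3, 1, ..., 1).  If
   player 0 reports x, the project is built iff x >= 2; when it is built
   player 0 is pivotal and pays 1, otherwise player 1 is pivotal and pays
   x + 1 >= 1. *)

Lemma sumR_ext n f g :
  (forall k, (k < n)%nat -> f k = g k) -> sumR n f = sumR n g.
Proof.
  induction n as [|n IH]; intros Hfg; simpl; auto.
  rewrite IH, Hfg; auto; intros; apply Hfg; lia.
Qed.

Lemma sumR_add n f g : sumR n (fun k => f k + g k) = sumR n f + sumR n g.
Proof. induction n as [|n IH]; simpl; [lra|]. rewrite IH; lra. Qed.

Lemma sumR_sub n f g : sumR n (fun k => f k - g k) = sumR n f - sumR n g.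
Proof. induction n as [|n IH]; simpl; [lra|]. rewrite IH; lra. Qed.

Lemma sumR_const n v : sumR n (fun _ => v) = INR n * v.
Proof. induction n as [|n IH]; simpl sumR; [simpl; lra|]. rewrite IH, S_INR; lra. Qed.

Lemma sumR_indicator n m v :
  (m < n)%nat -> sumR n (fun k => if Nat.eq_dec k m then v else 0) = v.
Proof.
  induction n as [|n IH]; intros Hm; [lia|]. simpl.
  destruct (Nat.eq_dec n m) as [->|Hnm].
  - rewrite (sumR_ext _ _ (fun _ => 0)), sumR_const; [lra|].
    intros k Hk. destruct (Nat.eq_dec k m); [lia|auto].
  - rewrite IH; [lra|lia].
Qed.

Lemma sumR_ex_eq n i g : (i < n)%nat -> sumR_ex n i g = sumR n g - g i.
Proof.
  intros Hi. unfold sumR_ex.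
  rewrite (sumR_ext n g (fun k => (if Nat.eq_dec k i then 0 else g k)
                                  + (if Nat.eq_dec k i then g i else 0))).
  - rewrite sumR_add, sumR_indicator; auto; lra.
  - intros k _. destruct (Nat.eq_dec k i); subst; lra.
Qed.

Lemma sumR_nonpos n g : (forall k, (k < n)%nat -> g k <= 0) -> sumR n g <= 0.
Proof.
  induction n as [|n IH]; intros Hg; simpl; [lra|].
  assert (g n <= 0) by (apply Hg; lia).
  assert (sumR n g <= 0) by (apply IH; intros; apply Hg; lia). lra.
Qed.

Lemma sumR_le_term n g j :
  (forall k, (k < n)%nat -> g k <= 0) -> (j < n)%nat -> sumR n g <= g j.
Proof.
  induction n as [|n IH]; intros Hg Hj; [lia|]. simpl.
  destruct (Nat.eq_dec j n) as [->|Hjn].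
  - assert (sumR n g <= 0) by (apply sumR_nonpos; intros; apply Hg; lia). lra.
  - assert (g n <= 0) by (apply Hg; lia).
    assert (sumR n g <= g j) by (apply IH; [intros; apply Hg; lia|lia]). lra.
Qed.

(* No player is ever paid by VCG: the others' welfare under the efficient
   decision is at most their best achievable welfare. *)
Lemma t_VCG_nonpos n c cs th j : t_VCG n c cs th j <= 0.
Proof.
  unfold t_VCG.
  set (w0 := sumR_ex n j (fun k => valuation (cs k) false (th k))).
  set (w1 := sumR_ex n j (fun k => valuation (cs k) true (th k))).
  pose proof (Rmax_l w0 w1). pose proof (Rmax_r w0 w1).
  destruct (eff_decision n c th); unfold w0, w1 in *; lra.
Qed.

(* Closed form: with total surplus s = sum theta - c and player j's net value
   w = theta_j - c_j, player j pays max(0, w - s) if the project is built and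
   max(0, s - w) otherwise, i.e. exactly the amount by which j is pivotal. *)
Lemma t_VCG_closed_form n c cs th j :
  (j < n)%nat -> sumR n cs = c ->
  t_VCG n c cs th j =
  if Rle_dec c (sumR n th)
  then - Rmax 0 ((th j - cs j) - (sumR n th - c))
  else - Rmax 0 ((sumR n th - c) - (th j - cs j)).
Proof.
  intros Hj Hc. unfold t_VCG, eff_decision, valuation.
  assert (Hnot : sumR_ex n j (fun _ => 0) = 0).
  { rewrite sumR_ex_eq, sumR_const; auto; lra. }
  assert (Hbuilt : sumR_ex n j (fun k => th k - cs k)
                   = (sumR n th - c) - (th j - cs j)).
  { rewrite sumR_ex_eq, sumR_sub; auto; lra. }
  rewrite Hnot, Hbuilt. unfold Rmax.
  destruct (Rle_dec c (sumR n th)),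
           (Rle_dec 0 ((sumR n th - c) - (th j - cs j))),
           (Rle_dec 0 ((th j - cs j) - (sumR n th - c))); lra.
Qed.

Lemma S_BC_le n c cs th i b :
  0 <= c ->
  (forall x, 0 <= x <= c -> sumR n (fun k => t_VCG n c cs (upd th i x) k) <= b) ->
  S_BC n c cs th i <= b.
Proof.
  intros Hc Hb. unfold S_BC, Rsup.
  set (E := fun y => exists x, 0 <= x <= c /\
              y = sumR n (fun k => t_VCG n c cs (upd th i x) k)).
  assert (HE : forall y, E y -> y <= b) by (intros y [x [Hx ->]]; auto).
  destruct (excluded_middle_informative (exists l, is_lub E l)) as [Hlub|Hnolub].
  - destruct (constructive_indefinite_description _ Hlub) as [l Hl]; simpl.
    apply (proj2 Hl). intros y Hy; auto.
  - exfalso. apply Hnolub.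
    assert (Hbound : bound E) by (exists b; intros y Hy; auto).
    assert (Hne : exists y, E y).
    { exists (sumR n (fun k => t_VCG n c cs (upd th i 0) k)), 0. split; [lra|auto]. }
    destruct (completeness E Hbound Hne) as [l Hl]. exists l; exact Hl.
Qed.

Lemma t_BC_gain n c cs th i b :
  (0 < n)%nat -> S_BC n c cs th i <= b ->
  t_VCG n c cs th i - b / INR n <= t_BC n c cs th i.
Proof.
  intros Hn Hb. unfold t_BC, Rdiv.
  assert (0 < / INR n) by (apply Rinv_0_lt_compat, lt_0_INR; auto).
  nra.
Qed.

Lemma BC_weakly_dominates n c cs th i :
  (0 < n)%nat -> 0 <= c -> t_VCG n c cs th i <= t_BC n c cs th i.
Proof.
  intros Hn Hc.
  assert (HS : S_BC n c cs th i <= 0).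
  { apply S_BC_le; auto. intros x _.
    apply sumR_nonpos; intros; apply t_VCG_nonpos. }
  pose proof (t_BC_gain n c cs th i 0 Hn HS). unfold Rdiv in *. lra.
Qed.

Lemma BC_strict_gain n c cs th i delta :
  (0 < n)%nat -> 0 <= c -> 0 < delta ->
  (forall x, 0 <= x <= c ->
     sumR n (fun k => t_VCG n c cs (upd th i x) k) <= - delta) ->
  t_VCG n c cs th i < t_BC n c cs th i.
Proof.
  intros Hn Hc Hdelta Hdev.
  pose proof (t_BC_gain n c cs th i (- delta) Hn (S_BC_le n c cs th i _ Hc Hdev)).
  assert (0 < delta / INR n) by (apply Rdiv_lt_0_compat, lt_0_INR; auto).
  unfold Rdiv in *. lra.
Qed.

Definition example_cost (n : nat) : R := INR n + 2.

Definition example_shares (k : nat) : R := if Nat.eq_dec k 1 then 3 else 1.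

Definition example_profile (k : nat) : R :=
  if Nat.eq_dec k 1 then 0 else if Nat.eq_dec k 2 then 3 else 1.

Lemma example_shares_sum n : (1 < n)%nat -> sumR n example_shares = example_cost n.
Proof.
  intros Hn. unfold example_cost.
  rewrite (sumR_ext n _ (fun k => 1 + (if Nat.eq_dec k 1 then 2 else 0))).
  - rewrite sumR_add, sumR_const, sumR_indicator; [lra|lia].
  - intros k _; unfold example_shares; destruct (Nat.eq_dec k 1); lra.
Qed.

Lemma example_deviation_sum n x :
  (2 < n)%nat -> sumR n (upd example_profile 0 x) = INR n + x.
Proof.
  intros Hn.
  rewrite (sumR_ext n _ (fun k => 1 + ((if Nat.eq_dec k 0 then x - 1 else 0)
             + ((if Nat.eq_dec k 1 then -1 else 0) + (if Nat.eq_dec k 2 then 2 else 0))))).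
  - rewrite !sumR_add, sumR_const, !sumR_indicator; try lia; lra.
  - intros k _. unfold upd, example_profile. destruct k as [|[|[|k]]]; simpl; lra.
Qed.

Lemma example_types n : (0 < n)%nat -> in_types n (example_cost n) example_profile.
Proof.
  intros Hn k _. assert (1 <= INR n) by (apply (le_INR 1); lia).
  unfold example_cost, example_profile.
  destruct (Nat.eq_dec k 1); [lra|]. destruct (Nat.eq_dec k 2); lra.
Qed.

(* Whatever player 0 reports, some player pays VCG at least 1: player 0 itself
   if the project is built (x >= 2), player 1 otherwise. *)
Lemma example_deficit n x :
  (2 < n)%nat -> 0 <= x ->
  sumR n (fun k => t_VCG n (example_cost n) example_shares (upd example_profile 0 x) k)
  <= -1.
Proof.
  intros Hn Hx.
  set (t := fun k => t_VCG n (example_cost n) example_shares (upd example_profile 0 x) k).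
  assert (Ht : forall k, (k < n)%nat -> t k <= 0) by (intros; apply t_VCG_nonpos).
  assert (Hshares := example_shares_sum n ltac:(lia)).
  assert (Hsum := example_deviation_sum n x Hn).
  unfold example_cost in *.
  destruct (Rle_dec 2 x) as [Hbuilt|Hnot].
  - apply (Rle_trans _ (t 0%nat)); [apply sumR_le_term; auto; lia|].
    unfold t. rewrite t_VCG_closed_form, Hsum by (auto; lia).
    destruct (Rle_dec (INR n + 2) (INR n + x)); [|lra].
    unfold upd, example_shares; simpl. rewrite Rmax_right; lra.
  - apply (Rle_trans _ (t 1%nat)); [apply sumR_le_term; auto; lia|].
    unfold t. rewrite t_VCG_closed_form, Hsum by (auto; lia).
    destruct (Rle_dec (INR n + 2) (INR n + x)); [lra|].
    unfold upd, example_shares, example_profile; simpl. rewrite Rmax_right; lra.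
Qed.

Theorem theorem5 :
  forall n : nat, (3 <= n)%nat ->
  exists (c : R) (cs : nat -> R),
    0 < c /\
    (forall i, (i < n)%nat -> 0 < cs i) /\
    sumR n cs = c /\
    dominates n c (t_BC n c cs) (t_VCG n c cs).
Proof.
  intros n Hn.
  assert (Hc : 0 < example_cost n)
    by (unfold example_cost; pose proof (pos_INR n); lra).
  exists (example_cost n), example_shares.
  split; [exact Hc|].
  split; [intros i _; unfold example_shares; destruct (Nat.eq_dec i 1); lra|].
  split; [apply example_shares_sum; lia|].
  split.
  - intros th i _ _. apply BC_weakly_dominates; [lia|lra].
  - exists example_profile, 0%nat.
    split; [apply example_types; lia|]. split; [lia|].
    apply (BC_strict_gain _ _ _ _ _ 1); [lia|lra|lra|].
    intros x [Hx _]. apply example_deficit; [lia|exact Hx].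
Qed.
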